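(* Let $n\ge 3$ be an integer, let $d_0,\dots,d_{n-1}>0$ (indices modulo $n$), and let $\lambda\in(\tfrac14,1)$. With $\alpha_j$, $\beta_i$ and the $n\times n$ matrix $Q_n$ defined as in the context, let $S_n$ be the $4n\times 4n$ matrix of the linear map $$(P_j^{0,0},P_j^{1,0},P_j^{0,1},P_j^{1,1})_{j=0}^{n-1}\mapsto(\overline P_j^{0,0},\overline P_j^{1,0},\overline P_j^{0,1},\overline P_j^{1,1})_{j=0}^{n-1}$$ given, for all $j$, by $$\overline P_j^{0,0}=\sum_{i=0}^{n-1}Q_{j,i}P_i^{0,0},$$ $$\overline P_j^{1,0}=\frac{3(2d_{j-1}+d_{j+1})P_j^{0,0}+3d_{j+1}P_{j-1}^{0,0}+(2d_{j-1}+d_{j+1})P_j^{1,0}+d_{j+1}P_{j-1}^{0,1}}{8(d_{j-1}+d_{j+1})},$$ $$\overline P_{j-1}^{0,1}=\frac{3d_{j-1}P_j^{0,0}+3(d_{j-1}+2d_{j+1})P_{j-1}^{0,0}+d_{j-1}P_j^{1,0}+(d_{j-1}+2d_{j+1})P_{j-1}^{0,1}}{8(d_{j-1}+d_{j+1})},$$ $$\overline P_j^{1,1}=\tfrac{9}{16}P_j^{0,0}+\tfrac{3}{16}P_j^{1,0}+\tfrac{3}{16}P_j^{0,1}+\tfrac{1}{16}P_j^{1,1}.$$ Then the eigenvalues of $S_n$ satisfy $\lambda_1=1>\lambda_2=\lambda_3=\lambda>|\lambda_k|$ for $k=4,5,\dots,4n$; that is, $1$ is a simple eigenvalue, $\lambda$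 is an eigenvalue of multiplicity two, and all other $4n-3$ eigenvalues (with multiplicity) have modulus less than $\lambda$.
   Context: Indices are modulo $n$. $\alpha_j=\frac{1}{n}\frac{d_{j-1}d_{j+2}}{(d_{j-1}+d_{j+1})(d_j+d_{j+2})}$, $\beta_i=\frac{d_{i-1}(d_{i-2}+d_{i+2})+d_{i+2}(d_{i-1}+d_{i+3})}{\sum_{k=0}^{n-1}(d_k+d_{k+2})(d_{k-1}+d_{k+3})}$, and $Q_n=(Q_{i,j})$ with $Q_{i,j}=(1-\lambda)\beta_j+2\lambda\alpha_i(1+2\cos\frac{2(j-i)\pi}{n})$ for $j\ne i$ and $Q_{i,i}=\lambda+(1-\lambda)\beta_i-2(n-3)\lambda\alpha_i$. The points $P_j^{a,b}$ are the control points in the two rings around the polygonal face (of valence $n$) in a tuned hybrid non-uniform subdivision mesh, and $S_n$ is the local subdivision matrix (after enough levels that neighboring knot intervals equal $d_j$); in the paper the unknowns are ordered as $P^{0,0}_0,\dots,P^{0,0}_{n-1}$, then the pairs $(P_j^{1,0},P_{j-1}^{0,1})$, then $P^{1,1}_0,\dots,P^{1,1}_{n-1}$, which gives a block lower-triangular matrix. *)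

From mathcomp Require Import all_boot all_order all_algebra.
From mathcomp Require Import all_classical all_reals all_analysis.
From mathcomp.real_closed Require Import complex.
Set Implicit Arguments. Unset Strict Implicit. Unset Printing Implicit Defensive.
Import Order.TTheory GRing.Theory Num.Theory.
Local Open Scope ring_scope.

Section Subdiv.
Variable R : realType.
Variable n : nat.
Variable d : 'I_n -> R.
Variable lam : R.

Definition dm (k : nat) : R := odflt 0 (omap d (insub (k %% n)%N)).

(* alpha_j; negative indices j-1 are written j + n - 1 (mod n) *)
Definition alpha (j : nat) : R :=
  n%:R^-1 * (dm (j + n - 1)%N * dm (j + 2)%N)
  / ((dm (j + n - 1) + dm (j + 1)) * (dm j + dm (j + 2))).

Definition beta (i : nat) : R :=
  (dm (i + n - 1) * (dm (i + n - 2) + dm (i + 2))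
   + dm (i + 2) * (dm (i + n - 1) + dm (i + 3)))
  / \sum_(k < n) (dm k + dm (k + 2)) * (dm (k + n - 1) + dm (k + 3)).

Definition Qe (i j : nat) : R :=
  if i == j then lam + (1 - lam) * beta i - 2 * (n%:R - 3) * lam * alpha i
  else (1 - lam) * beta j
       + 2 * lam * alpha i
         * (1 + 2 * cos (2 * (j%:R - i%:R) * pi / n%:R)).

Local Notation ind i t := ((i == t %% n)%N%:R : R).

(* Entry of S_n in row (block a, index j), column (block b, index i).
   Blocks: 0 = P^{0,0}, 1 = P^{1,0}, 2 = P^{0,1}, 3 = P^{1,1}.
   Row (1, j) gives \bar P_j^{1,0}; row (2, j') gives \bar P_{j'}^{0,1},
   i.e. the formula for \bar P_{j-1}^{0,1} with j = j' + 1. *)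
Definition Sentry (a j b i : nat) : R :=
  match a with
  | 0 => if b == 0 then Qe j i else 0
  | 1 =>
    let dmi := dm (j + n - 1) in let dpl := dm (j + 1) in
    let den := 8 * (dmi + dpl) in
    match b with
    | 0 => ind i j * (3 * (2 * dmi + dpl) / den)
           + ind i (j + n - 1) * (3 * dpl / den)
    | 1 => ind i j * ((2 * dmi + dpl) / den)
    | 2 => ind i (j + n - 1) * (dpl / den)
    | _ => 0
    end
  | 2 =>
    let dmi := dm j in let dpl := dm (j + 2) in
    let den := 8 * (dmi + dpl) in
    match b with
    | 0 => ind i (j + 1) * (3 * dmi / den)
           + ind i j * (3 * (dmi + 2 * dpl) / den)
    | 1 => ind i (j + 1) * (dmi / den)
    | 2 => ind i j * ((dmi + 2 * dpl) / den)
    | _ => 0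
    end
  | 3 =>
    match b with
    | 0 => ind i j * (9 / 16)
    | 1 => ind i j * (3 / 16)
    | 2 => ind i j * (3 / 16)
    | 3 => ind i j * (1 / 16)
    | _ => 0
    end
  | _ => 0
  end.

Definition Smat : 'M[R]_(4 * n) :=
  \matrix_(r, c) Sentry (r %/ n)%N (r %% n)%N (c %/ n)%N (c %% n)%N.

End Subdiv.

Local Open Scope complex_scope.
Definition SmatC (R : realType) (n : nat) (d : 'I_n -> R) (lam : R)
  : 'M[R[i]]_(4 * n) := map_mx (fun x : R => x%:C) (Smat d lam).

From mathcomp Require Import all_boot all_order all_algebra.
From mathcomp Require Import all_classical all_reals all_analysis.
From mathcomp.real_closed Require Import complex.
From mathcomp Require Import ring lra zify.
Import Order.TTheory GRing.Theory Num.Theory.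
Set Implicit Arguments. Unset Strict Implicit. Unset Printing Implicit Defensive.
Local Open Scope ring_scope.
Local Open Scope complex_scope.

(* S_n is block lower triangular, with diagonal blocks Q_n (on the P^{0,0})
   and a 3n x 3n block B (on the other points), so char S_n = char Q_n * char B.
   B is nonnegative, and its row sums weighted by 1, 1, 4 on the P^{1,0},
   P^{0,1}, P^{1,1} are at most a quarter of the weight of the row: its
   spectrum lies in the disc of radius 1/4 < lambda.
   For Q_n, put theta = 2 pi / n.  The kernel 1 + 2 cos((j - i) theta) is n
   times the orthogonal projection onto the span of cos(j theta), sin(j theta)
   and 1, so this span is Q_n-invariant, and Q_n acts on it by a triangular
   matrix with diagonal lambda, lambda, sum_j beta_j = 1.  A left eigenvector x
   of the complementary block can be taken orthogonal to the span; pairing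
   x Q_n = z x with conj x then kills the beta and kernel terms, so z is a
   weighted mean of the lambda (1 - 2 n alpha_j), all in (-lambda, lambda)
   since 0 < n alpha_j < 1. *)

Lemma char_poly_similar (F : fieldType) k (A P : 'M[F]_k) :
  P \in unitmx -> char_poly (invmx P *m A *m P) = char_poly A.
Proof.
move=> P_unit; rewrite /char_poly /char_poly_mx.
have -> : 'X%:M - map_mx polyC (invmx P *m A *m P) =
    map_mx polyC (invmx P) *m ('X%:M - map_mx polyC A) *m map_mx polyC P.
  rewrite mulmxBr mulmxBl mul_mx_scalar -scalemxAl -!map_mxM mulVmx //.
  by rewrite map_mx1 scalemx1.
rewrite !det_mulmx !det_map_mx mulrC mulrA -rmorphM /= -det_mulmx mulmxV //.
by rewrite det1 rmorph1 mul1r.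
Qed.

Lemma char_poly_ublock (R : comNzRingType) k l (A : 'M[R]_k) (B : 'M[R]_(k, l))
    (D : 'M[R]_l) :
  char_poly (block_mx A B 0 D) = char_poly A * char_poly D.
Proof.
rewrite /char_poly /char_poly_mx map_block_mx /= map_mx0 (scalar_mx_block k l).
by rewrite opp_block_mx add_block_mx oppr0 addr0 det_ublock.
Qed.

Lemma char_poly_lblock (R : comNzRingType) k l (A : 'M[R]_k) (C : 'M[R]_(l, k))
    (D : 'M[R]_l) :
  char_poly (block_mx A 0 C D) = char_poly A * char_poly D.
Proof.
rewrite /char_poly /char_poly_mx map_block_mx /= map_mx0 (scalar_mx_block k l).
by rewrite opp_block_mx add_block_mx oppr0 addr0 det_lblock.
Qed.

Section StableColumnSpace.
Variables (F : fieldType) (r m : nat) (A T : 'M[F]_(r + m)) (X : 'M[F]_r).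
Hypotheses (T_unit : T \in unitmx) (A_lsubmxT : A *m lsubmx T = lsubmx T *m X).

Lemma lsubmx_mulmx p (B : 'M[F]_(p, r + m)) : lsubmx (B *m T) = B *m lsubmx T.
Proof. by rewrite -{1}[T]hsubmxK mul_mx_row row_mxKl. Qed.

Lemma invmx_mul_lsubmx : invmx T *m lsubmx T = col_mx 1%:M 0.
Proof. by rewrite -lsubmx_mulmx mulVmx // (scalar_mx_block r m) block_mxEh row_mxKl. Qed.

Lemma similar_ublock :
  invmx T *m A *m T =
  block_mx X (ursubmx (invmx T *m A *m T)) 0 (drsubmx (invmx T *m A *m T)).
Proof.
have lsub : lsubmx (invmx T *m A *m T) = col_mx X 0.
  by rewrite lsubmx_mulmx -mulmxA A_lsubmxT mulmxA invmx_mul_lsubmx mul_col_mx mul1mx mul0mx.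
have ul_dl (B : 'M[F]_(r + m)) :
    ulsubmx B = usubmx (lsubmx B) /\ dlsubmx B = dsubmx (lsubmx B).
  by split; apply/matrixP => i j; rewrite !mxE.
rewrite -[LHS]submxK; have [-> ->] := ul_dl (invmx T *m A *m T).
by rewrite lsub col_mxKu col_mxKd.
Qed.

Lemma char_poly_stable :
  char_poly A = char_poly X * char_poly (drsubmx (invmx T *m A *m T)).
Proof. by rewrite -(char_poly_similar A T_unit) {1}similar_ublock char_poly_ublock. Qed.

Lemma eigenvalue_stable_compl z :
  eigenvalue (drsubmx (invmx T *m A *m T)) z ->
  exists x : 'rV_(r + m), [/\ x != 0, x *m A = z *: x & x *m lsubmx T = 0].
Proof.
case/eigenvalueP => y yY_z y_neq0.
exists (row_mx 0 y *m invmx T); split.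
- rewrite mulmx_free_eq0 ?row_free_unit ?unitmx_inv //.
  by rewrite row_mx_eq0 eqxx.
- rewrite -mulmxA.
  have -> : invmx T *m A = invmx T *m A *m T *m invmx T by rewrite mulmxK.
  rewrite similar_ublock mulmxA mul_row_block.
  rewrite !mulmx0 !mul0mx !add0r yY_z.
  by rewrite scalemxAl scale_row_mx scaler0.
- by rewrite -mulmxA invmx_mul_lsubmx mul_row_col mul0mx mulmx0 addr0.
Qed.

End StableColumnSpace.

Lemma psumr_gt0 (F : numDomainType) k (f : 'I_k -> F) j0 :
  (forall j, 0 <= f j) -> 0 < f j0 -> 0 < \sum_j f j.
Proof.
move=> f_ge0 fj0; rewrite (bigD1 j0) //= ltr_pwDl //.
by apply: sumr_ge0 => j _; exact: f_ge0.
Qed.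

Lemma eigenvalue_norm_le (F : numFieldType) k (B : 'M[F]_k) (w : 'I_k -> F) (c z : F) :
  (forall i, 0 < w i) -> (forall i, \sum_j `|B i j| * w j <= c * w i) ->
  eigenvalue B z -> `|z| <= c.
Proof.
move=> w_gt0 rowsum /eigenvalueP [v vB_z /rV0Pn [j0 vj0]].
pose W := \sum_j `|v 0 j| * w j.
have W_gt0 : 0 < W.
  apply: (@psumr_gt0 _ _ _ j0) => [j|]; last by rewrite mulr_gt0 ?normr_gt0.
  by rewrite mulr_ge0 // ltW.
have zv j : `|z| * `|v 0 j| <= \sum_i `|v 0 i| * `|B i j|.
  rewrite -normrM; have := congr1 (fun M : 'rV_k => M 0 j) vB_z; rewrite !mxE => <-.
  by apply: (le_trans (ler_norm_sum _ _ _)); under eq_bigr do rewrite normrM.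
rewrite -(ler_pM2r W_gt0); apply: (le_trans (y := \sum_i `|v 0 i| * (c * w i))).
  rewrite mulr_sumr; apply: (le_trans (y := \sum_j \sum_i `|v 0 i| * `|B i j| * w j)).
    by apply: ler_sum => j _; rewrite mulrA -mulr_suml ler_pM2r.
  rewrite exchange_big /=; apply: ler_sum => i _.
  by under eq_bigr do rewrite -mulrA; rewrite -mulr_sumr ler_wpM2l.
by rewrite /W mulr_sumr; apply: ler_sum => i _; rewrite mulrCA.
Qed.

Lemma norm_lt_weighted_mean (F : numFieldType) k (p mu : 'I_k -> F) (z c : F) j0 :
  (forall j, 0 <= p j) -> 0 < p j0 -> (forall j, `|mu j| < c) ->
  z * \sum_j p j = \sum_j mu j * p j -> `|z| < c.
Proof.
move=> p_ge0 pj0 mu_lt mean.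
have P_gt0 : 0 < \sum_j p j by exact: psumr_gt0 pj0.
rewrite -(ltr_pM2r P_gt0) -{1}(ger0_norm (ltW P_gt0)) -normrM mean.
apply: (le_lt_trans (ler_norm_sum _ _ _)); rewrite mulr_sumr -subr_gt0 -sumrB.
apply: (@psumr_gt0 _ _ _ j0) => [j|]; rewrite normrM (ger0_norm (p_ge0 _)) -mulrBl.
  by rewrite mulr_ge0 // subr_ge0 ltW.
by rewrite mulr_gt0 // subr_gt0.
Qed.

Lemma normcR (R : rcfType) (r : R) : `|r%:C| = `|r|%:C.
Proof. by rewrite normc_def /= expr0n /= addr0 sqrtr_sqr. Qed.

Lemma sum_expr_eq0 (R : idomainType) (w : R) k :
  w ^+ k = 1 -> w != 1 -> \sum_(j < k) w ^+ j = 0.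
Proof.
move=> wk w_neq1; apply/eqP; have := subrX1 w k; rewrite wk subrr => /esym/eqP.
by rewrite mulf_eq0 subr_eq0 (negbTE w_neq1).
Qed.

Lemma sum_delta_nat (V : nzRingType) k (i : 'I_k) (F : 'I_k -> V) :
  \sum_(j < k) ((i : nat) == j)%:R * F j = F i.
Proof.
rewrite (bigD1 i) //= eqxx mul1r big1 ?addr0 // => j /negbTE.
by rewrite eq_sym -val_eqE => ->; rewrite mul0r.
Qed.

Lemma sum_shift_periodic (V : nmodType) n (F : nat -> V) c :
  (forall t, F (t + n)%N = F t) -> \sum_(i < n) F (i + c)%N = \sum_(i < n) F i.
Proof.
move=> F_per; elim: c => [|c IH]; first by under eq_bigr do rewrite addn0.
rewrite -IH; case: n F_per {IH} => [|n] F_per; first by rewrite !big_ord0.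
rewrite big_ord_recr big_ord_recl /= addrC add0n addnS -addSn addnC F_per.
by congr (_ + _); apply: eq_bigr => i _; rewrite /bump /= add1n addSnnS.
Qed.

Lemma divnDl_self n k : (0 < n)%N -> ((n + k) %/ n = (k %/ n).+1)%N.
Proof. by move=> n_gt0; rewrite divnDl ?dvdnn // divnn n_gt0 add1n. Qed.

Lemma sum_ord_divmod (V : nmodType) p n (F : nat -> nat -> V) : (0 < n)%N ->
  \sum_(k < p * n) F (k %/ n)%N (k %% n)%N = \sum_(a < p) \sum_(l < n) F a l.
Proof.
move=> n_gt0; elim: p F => [|p IH] F; first by rewrite !big_ord0.
rewrite big_ord_recl -(IH (fun a => F a.+1)).
rewrite (_ : \sum_(k < p.+1 * n) _ = \sum_(k < n + p * n) F (k %/ n)%N (k %% n)%N) //.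
rewrite big_split_ord /=; congr (_ + _); apply: eq_bigr => k _ /=.
  by rewrite divn_small ?modn_small.
by rewrite divnDl_self // modnDl.
Qed.

Section RootsOfUnity.
Variables (R : realType) (n : nat).
Hypothesis n_gt2 : (2 < n)%N.

Definition ucos (j : nat) : R := cos (j%:R * (2 * pi / n%:R)).
Definition usin (j : nat) : R := sin (j%:R * (2 * pi / n%:R)).
Definition uroot (j : nat) : R[i] := ucos j +i* usin j.

Lemma ucos0 : ucos 0 = 1. Proof. by rewrite /ucos mul0r cos0. Qed.
Lemma usin0 : usin 0 = 0. Proof. by rewrite /usin mul0r sin0. Qed.

Lemma ucos_double j : ucos (2 * j) = 2 * ucos j ^+ 2 - 1.
Proof. by rewrite /ucos natrM -mulrA mulr_natl cos_mulr2n -mulr_natl. Qed.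

Lemma usin_double j : usin (2 * j) = 2 * usin j * ucos j.
Proof. by rewrite /usin /ucos natrM -mulrA mulr_natl sin_mulr2n -mulr_natl mulrCA mulrC. Qed.

Lemma cos_uroot_diff (i j : nat) :
  cos (2 * (j%:R - i%:R) * pi / n%:R) = ucos i * ucos j + usin i * usin j.
Proof. by rewrite /ucos /usin -cosB -cosN; congr cos; ring. Qed.

Lemma usin1_gt0 : 0 < usin 1.
Proof.
have n_gt0 : (0 : R) < n%:R by rewrite ltr0n; apply: ltn_trans n_gt2.
apply: sin_gt0_pi; rewrite mul1r divr_gt0 ?mulr_gt0 ?pi_gt0 //=.
by rewrite ltr_pdivrMr // mulrC ltr_pM2l ?pi_gt0 // ltr_nat.
Qed.

Lemma urootX a j : uroot a ^+ j = uroot (a * j).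
Proof.
elim: j => [|j IH]; first by rewrite expr0 muln0 /uroot ucos0 usin0.
rewrite exprSr IH /uroot /ucos /usin mulnS natrD (mulrDl a%:R) addrC cosD sinD.
by apply/eqP; rewrite eq_complex /=; apply/andP; split; apply/eqP; ring.
Qed.

Lemma uroot_n a : uroot a ^+ n = 1.
Proof.
rewrite urootX /uroot /ucos /usin.
have -> : (a * n)%:R * (2 * pi / n%:R) = 0 + pi *+ 2 *+ a :> R.
  rewrite add0r -mulrnA -mulr_natl !natrM; field.
  by rewrite pnatr_eq0 -lt0n; apply: ltn_trans n_gt2.
by rewrite (periodicn (@cosD2pi R)) (periodicn (@sinD2pi R)) cos0 sin0.
Qed.

Lemma uroot1_neq1 : uroot 1 != 1.
Proof. by apply/negP => /eqP/(congr1 (@complex.Im R)) /= /eqP; rewrite gt_eqF ?usin1_gt0. Qed.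

Lemma uroot2_neq1 : uroot 2 != 1.
Proof.
rewrite -[2%N]mul1n -urootX -subr_eq0 subr_sqr_1 mulf_eq0 subr_eq0 negb_or uroot1_neq1.
rewrite addr_eq0; apply/negP => /eqP/(congr1 (@complex.Im R)) /= /eqP.
by rewrite oppr0 gt_eqF ?usin1_gt0.
Qed.

Lemma sum_ucos_usin_mul a : uroot a != 1 ->
  \sum_(j < n) ucos (a * j) = 0 /\ \sum_(j < n) usin (a * j) = 0.
Proof.
move=> ua_neq1; have := sum_expr_eq0 (uroot_n a) ua_neq1.
under eq_bigr do rewrite urootX.
have -> : \sum_(j < n) uroot (a * j) =
    (\sum_(j < n) ucos (a * j)) +i* (\sum_(j < n) usin (a * j)).
  by elim/big_rec3: _ => [|j x y s _ ->].
by move/eqP; rewrite eq_complex /= => /andP [/eqP -> /eqP ->].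
Qed.

Lemma sum_ucos : \sum_(j < n) ucos j = 0.
Proof. by have [] := sum_ucos_usin_mul uroot1_neq1; under eq_bigr do rewrite mul1n. Qed.

Lemma sum_usin : \sum_(j < n) usin j = 0.
Proof. by have [_] := sum_ucos_usin_mul uroot1_neq1; under eq_bigr do rewrite mul1n. Qed.

Lemma sum_ucos_sqr : \sum_(j < n) ucos j ^+ 2 = n%:R / 2.
Proof.
have [+ _] := sum_ucos_usin_mul uroot2_neq1; under eq_bigr do rewrite ucos_double.
rewrite sumrB -mulr_sumr sumr_const card_ord => /eqP; rewrite subr_eq0 => /eqP sum2.
by rewrite -sum2 mulrC mulKf ?pnatr_eq0.
Qed.

Lemma sum_usin_sqr : \sum_(j < n) usin j ^+ 2 = n%:R / 2.
Proof.
under eq_bigr do rewrite /usin sin2cos2 -/(ucos _).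
by rewrite sumrB sum_ucos_sqr sumr_const card_ord; field.
Qed.

Lemma sum_usin_ucos : \sum_(j < n) usin j * ucos j = 0.
Proof.
have [_] := sum_ucos_usin_mul uroot2_neq1; under eq_bigr do rewrite usin_double -mulrA.
by rewrite -mulr_sumr => /eqP; rewrite mulf_eq0 pnatr_eq0 /= => /eqP.
Qed.

Definition ukern (i j : nat) : R := 1 + 2 * (ucos i * ucos j + usin i * usin j).

Lemma sum_ukern_span i (a b e : R) :
  \sum_(j < n) ukern i j * (a * ucos j + b * usin j + e) =
  n%:R * (a * ucos i + b * usin i + e).
Proof.
have expand (j : 'I_n) : ukern i j * (a * ucos j + b * usin j + e) =
    e + (a + 2 * e * ucos i) * ucos j + (b + 2 * e * usin i) * usin j
    + (2 * a * ucos i) * ucos j ^+ 2 + (2 * b * usin i) * usin j ^+ 2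
    + (2 * (b * ucos i + a * usin i)) * (usin j * ucos j).
  by rewrite /ukern; ring.
rewrite (eq_bigr _ (fun j _ => expand j)) !big_split /= -!mulr_sumr.
rewrite sum_ucos sum_usin sum_ucos_sqr sum_usin_sqr sum_usin_ucos.
by rewrite sumr_const card_ord; field.
Qed.

Lemma sum_ukern_orth (i : nat) (y : 'I_n -> R[i]) :
  \sum_(j < n) y j = 0 -> \sum_(j < n) (ucos j)%:C * y j = 0 ->
  \sum_(j < n) (usin j)%:C * y j = 0 -> \sum_(j < n) (ukern i j)%:C * y j = 0.
Proof.
move=> y0 yc ys.
have expand (j : 'I_n) : (ukern i j)%:C * y j =
    y j + 2 * (ucos i)%:C * ((ucos j)%:C * y j) + 2 * (usin i)%:C * ((usin j)%:C * y j).
  by rewrite /ukern !(rmorphD, rmorphM, rmorph1, rmorph_nat) /=; ring.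
rewrite (eq_bigr _ (fun j _ => expand j)) !big_split /= -!mulr_sumr.
by rewrite y0 yc ys !mulr0 !addr0.
Qed.

End RootsOfUnity.

Arguments ucos {R} n j.
Arguments usin {R} n j.
Arguments ukern {R} n i j.

Section CentralMatrix.
Variables (R : realType) (n : nat) (d : 'I_n -> R) (lam : R).
Hypotheses (n_gt2 : (2 < n)%N) (d_gt0 : forall j, 0 < d j).
Let n_gt0 : (0 < n)%N := ltnW (ltnW n_gt2).

Lemma dm_gt0 t : 0 < dm d t.
Proof. by rewrite /dm; case: insubP => [u _ _ /=|]; [exact: d_gt0 | rewrite ltn_pmod]. Qed.

Lemma dmDn t : dm d (t + n) = dm d t.
Proof. by rewrite /dm modnDr. Qed.

Lemma sum_beta : \sum_(i < n) beta d i = 1.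
Proof.
rewrite /beta -mulr_suml; set Den := (X in _ / X).
have Den_gt0 : 0 < Den.
  have term_gt0 (k : 'I_n) :
      0 < (dm d k + dm d (k + 2)) * (dm d (k + n - 1) + dm d (k + 3)).
    by rewrite mulr_gt0 // addr_gt0 // dm_gt0.
  by apply: (@psumr_gt0 _ _ _ (Ordinal n_gt0)) => // k; exact: ltW.
rewrite -[X in X / _ = _](_ : Den = _) ?divff ?gt_eqF //.
rewrite /Den; under eq_bigr do rewrite mulrDl !mulrDr.
under [RHS]eq_bigr do rewrite !mulrDr.
rewrite !big_split /=.
(* Expanded, the numerators of the beta_i are the four products of the k-th term
   of the denominator, two of them with k = i - 1 instead of k = i. *)
rewrite -(@sum_shift_periodic _ n (fun k => dm d k * dm d (k + n - 1)%N) (n - 1)%N); last first.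
  by move=> t; rewrite dmDn (_ : t + n + n - 1 = t + n - 1 + n)%N ?dmDn //; lia.
rewrite -(@sum_shift_periodic _ n (fun k => dm d k * dm d (k + 3)%N) (n - 1)%N); last first.
  by move=> t; rewrite dmDn (_ : t + n + 3 = t + 3 + n)%N ?dmDn //; lia.
have dm_shift t t' : (t = t' + n)%N -> dm d t = dm d t' by move=> ->; exact: dmDn.
rewrite [RHS]addrACA; congr (_ + _ + (_ + _)); apply: eq_bigr => i _.
- rewrite (dm_shift (i + (n - 1) + n - 1) (i + n - 2))%N; last by lia.
  by congr (dm d _ * _); lia.
- rewrite (dm_shift (i + (n - 1) + 3) (i + 2))%N; last by lia.
  by rewrite mulrC; congr (_ * dm d _); lia.
- by rewrite mulrC.
Qed.

Lemma alpha_bound i : 0 < n%:R * alpha d i < 1.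
Proof.
rewrite /alpha mulrA mulrA mulfV ?pnatr_eq0 -?lt0n // mul1r.
have := dm_gt0 (i + n - 1); have := dm_gt0 (i + 2).
have := dm_gt0 (i + 1); have := dm_gt0 i.
set a := dm d (i + n - 1); set b := dm d (i + 2); set c := dm d (i + 1); set e := dm d i.
move=> e_gt0 c_gt0 b_gt0 a_gt0.
rewrite divr_gt0 ?mulr_gt0 ?addr_gt0 //= ltr_pdivrMr ?mulr_gt0 ?addr_gt0 // mul1r -subr_gt0.
have -> : (a + c) * (e + b) - a * b = a * e + c * e + c * b by ring.
by rewrite !addr_gt0 ?mulr_gt0.
Qed.

Lemma Qe_decomp i j :
  Qe d lam i j = (1 - lam) * beta d j + 2 * lam * alpha d i * ukern n i j
                 + (i == j)%:R * (lam - 2 * n%:R * lam * alpha d i).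
Proof.
rewrite /Qe /ukern; case: eqVneq => [<-|_]; last by rewrite cos_uroot_diff /=; ring.
have := @cos2Dsin2 R (i%:R * (2 * pi / n%:R)).
by rewrite !expr2 -/(ucos _ i) -/(usin _ i) => ->; rewrite /=; ring.
Qed.

Lemma Qe_span (i : 'I_n) (a b e : R) :
  \sum_(j < n) Qe d lam i j * (a * ucos n j + b * usin n j + e) =
  lam * (a * ucos n i + b * usin n i + e)
  + (1 - lam) * \sum_(j < n) beta d j * (a * ucos n j + b * usin n j + e).
Proof.
set v := fun j : nat => a * ucos n j + b * usin n j + e.
have expand (j : 'I_n) : Qe d lam i j * v j =
    (1 - lam) * (beta d j * v j) + 2 * lam * alpha d i * (ukern n i j * v j)
    + ((i : nat) == j)%:R * ((lam - 2 * n%:R * lam * alpha d i) * v j).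
  by rewrite Qe_decomp; ring.
rewrite (eq_bigr _ (fun j _ => expand j)) !big_split /= -!mulr_sumr sum_ukern_span //.
by rewrite sum_delta_nat /v; ring.
Qed.

Definition Qmx : 'M[R]_n := \matrix_(i, j) Qe d lam i j.

Definition trig_mx : 'M[R]_(n, 3) :=
  \matrix_(j, t) (((t : nat) == 0)%:R * ucos n j + ((t : nat) == 1)%:R * usin n j
                  + ((t : nat) == 2)%:R).

Definition Qtrig_mx : 'M[R]_3 :=
  \matrix_(r, t) (lam * ((r : nat) == t)%:R
                  + ((r : nat) == 2)%:R * ((1 - lam) * \sum_(j < n) beta d j * trig_mx j t)).

Lemma Qmx_trig_mx : Qmx *m trig_mx = trig_mx *m Qtrig_mx.
Proof.
apply/matrixP => i t; rewrite !mxE; under eq_bigr do rewrite !mxE.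
rewrite Qe_span !big_ord_recr big_ord0 /= !mxE /=.
under [\sum_(j < n) beta d j * trig_mx j t]eq_bigr do rewrite mxE.
by case: t => [[|[|[|//]]] ?] /=; ring.
Qed.

Lemma char_poly_Qtrig_mx : char_poly Qtrig_mx = ('X - 1) * ('X - lam%:P) ^+ 2.
Proof.
rewrite char_poly_trig; last first.
  apply/is_trig_mxP => r t r_lt_t; rewrite /Qtrig_mx mxE.
  have r_neq_t : (r : nat) != t by rewrite neq_ltn r_lt_t.
  have r_neq2 : (r : nat) != 2 by rewrite neq_ltn (leq_trans r_lt_t) // -ltnS.
  by rewrite (negbTE r_neq_t) (negbTE r_neq2) mulr0 mul0r addr0.
have diag (r : 'I_3) : Qtrig_mx r r = if (r : nat) == 2 then 1 else lam.
  rewrite /Qtrig_mx mxE eqxx mulr1; case: eqP => [r2|_]; last by rewrite mul0r addr0.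
  rewrite mul1r (_ : \sum_(j < n) beta d j * trig_mx j r = 1); first by rewrite mulr1 subrKC.
  rewrite -[RHS]sum_beta; apply: eq_bigr => j _.
  by rewrite mxE r2 /= !mul0r !add0r mulr1.
under eq_bigr do rewrite diag.
by rewrite !big_ord_recr big_ord0 /= mul1r polyC1 mulrC expr2.
Qed.

Lemma map_char_poly_Qtrig_mx :
  char_poly (map_mx (real_complex R) Qtrig_mx) = ('X - 1) * ('X - lam%:C%:P) ^+ 2.
Proof.
rewrite -map_char_poly char_poly_Qtrig_mx rmorphM rmorphXn !rmorphB /= map_polyX.
by rewrite !(map_polyC (real_complex R)).
Qed.

Lemma Qmx_eigen_trig_pairing (x : 'rV[R[i]]_n) z :
  x *m map_mx (real_complex R) Qmx = z *: x ->
  x *m map_mx (real_complex R) trig_mx = 0 ->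
  z * \sum_(j < n) x 0 j * (x 0 j)^*%C =
  \sum_(j < n) (lam - 2 * n%:R * lam * alpha d j)%:C * (x 0 j * (x 0 j)^*%C).
Proof.
move=> xQ_z x_orth; pose y j := (x 0 j)^*%C.
have orth (t : 'I_3) : \sum_(j < n) (trig_mx j t)%:C * y j = 0.
  have := congr1 (fun M : 'rV_3 => (M 0 t)^*%C) x_orth; rewrite !mxE conjc0 rmorph_sum.
  move=> sum0; rewrite -[RHS]sum0; apply: eq_bigr => j _.
  by rewrite rmorphM /= [in RHS]mxE conjc_real mulrC.
have sum_y : \sum_(j < n) y j = 0.
  by rewrite -[RHS](orth ord_max); apply: eq_bigr => j _; rewrite mxE /= !mul0r !add0r mul1r.
have kern_y (i : nat) : \sum_(j < n) (ukern n i j)%:C * y j = 0.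
  apply: sum_ukern_orth => //.
    by rewrite -[RHS](orth 0); apply: eq_bigr => j _; rewrite mxE /= mul1r mul0r !addr0.
  by rewrite -[RHS](orth 1); apply: eq_bigr => j _; rewrite mxE /= mul0r mul1r add0r addr0.
have sum_x : \sum_(i < n) x 0 i = 0 by rewrite -[LHS]conjcK rmorph_sum sum_y conjc0.
have entry j : z * x 0 j = \sum_(i < n) x 0 i * (Qe d lam i j)%:C.
  have := congr1 (fun M : 'rV_n => M 0 j) xQ_z; rewrite !mxE => <-.
  by apply: eq_bigr => i _; rewrite !mxE.
have expand (i j : 'I_n) : x 0 i * (Qe d lam i j)%:C * y j =
    ((1 - lam) * beta d j)%:C * y j * x 0 i
    + (2 * lam * alpha d i)%:C * x 0 i * ((ukern n i j)%:C * y j)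
    + ((j : nat) == i)%:R * ((lam - 2 * n%:R * lam * alpha d i)%:C * x 0 i * y j).
  rewrite Qe_decomp eq_sym !(rmorphD, rmorphM, rmorphB, rmorph_nat) /=.
  by move: (_ == _)%:R => delta; ring.
(* In sum_(i,j) x_i Q_ij conj(x_j), the beta part vanishes since sum_i x_i = 0,
   the kernel part since conj x is orthogonal to cos, sin and 1. *)
rewrite mulr_sumr (eq_bigr _ (fun j _ => (mulrA _ _ _))).
under eq_bigr do rewrite entry mulr_suml; under eq_bigr do under eq_bigr do rewrite expand.
under eq_bigr do rewrite !big_split /= -mulr_sumr sum_x mulr0 add0r.
rewrite big_split /= exchange_big /=.
under eq_bigr do rewrite -mulr_sumr kern_y mulr0.
by rewrite big1 // add0r; apply: eq_bigr => j _; rewrite sum_delta_nat mulrA.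
Qed.

Hypothesis lam_gt0 : 0 < lam.

Lemma norm_Qdiag_lt j : `|lam - 2 * n%:R * lam * alpha d j| < lam.
Proof.
rewrite ltr_norml (_ : 2 * n%:R * lam * alpha d j = 2 * lam * (n%:R * alpha d j)); last by ring.
have /andP [] := alpha_bound j; move: (n%:R * alpha d j) => a a_gt0 a_lt1.
have : 0 < lam * a by rewrite mulr_gt0.
have : 0 < lam * (1 - a) by rewrite mulr_gt0 // subr_gt0.
by move=> *; apply/andP; split; lra.
Qed.

Lemma Qmx_eigen_trig_orth (x : 'rV[R[i]]_n) z :
  x != 0 -> x *m map_mx (real_complex R) Qmx = z *: x ->
  x *m map_mx (real_complex R) trig_mx = 0 -> `|z| < lam%:C.
Proof.
move=> /rV0Pn [j0 xj0] xQ_z x_orth.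
apply: (norm_lt_weighted_mean (j0 := j0) _ _ _ (Qmx_eigen_trig_pairing xQ_z x_orth)).
- by move=> j; exact: mulcJ_ge0.
- by rewrite lt_def mulcJ_ge0 mulf_neq0 ?conjc_eq0.
- by move=> j; rewrite normcR ltcR norm_Qdiag_lt.
Qed.

End CentralMatrix.

Section TrigBasis.
Variables (R : realType) (m : nat).

Definition trig_basis_mx : 'M[R]_(3 + m) :=
  block_mx (usubmx (trig_mx R (3 + m))) 0 (dsubmx (trig_mx R (3 + m))) 1%:M.

Lemma lsubmx_trig_basis_mx : lsubmx trig_basis_mx = trig_mx R (3 + m).
Proof. by rewrite /trig_basis_mx block_mxEh row_mxKl vsubmxK. Qed.

Lemma det_usubmx_trig_mx :
  \det (usubmx (trig_mx R (3 + m))) = 2 * usin (3 + m) 1 * (1 - ucos (3 + m) 1).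
Proof.
rewrite (expand_det_row _ 0) !big_ord_recl big_ord0 /cofactor.
rewrite !(expand_det_row _ 0) !big_ord_recl !big_ord0 /cofactor !det_mx11 !mxE /=.
rewrite /bump /= ucos0 usin0 !add0n !addn0 -[(1 + 1)%N]/(2 * 1)%N ucos_double usin_double.
by rewrite !muln1; ring.
Qed.

Lemma trig_basis_mx_unit : trig_basis_mx \in unitmx.
Proof.
have s_gt0 : 0 < usin (3 + m) 1 :> R by exact: usin1_gt0.
have c_neq1 : ucos (3 + m) 1 != 1 :> R.
  apply/eqP => c1; have := @cos2Dsin2 R (1%:R * (2 * pi / (3 + m)%:R)).
  rewrite -/(ucos _ 1) -/(usin _ 1) c1 expr1n => /eqP.
  by rewrite -subr_eq0 addrAC subrr add0r sqrf_eq0 gt_eqF.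
rewrite unitmxE /trig_basis_mx det_lblock det1 mulr1 det_usubmx_trig_mx unitfE.
by rewrite !mulf_eq0 !negb_or pnatr_eq0 (gt_eqF s_gt0) subr_eq0 [1 == _]eq_sym c_neq1.
Qed.

End TrigBasis.

Section CentralMatrixSpectrum.
Variables (R : realType) (m : nat) (d : 'I_(3 + m) -> R) (lam : R).
Hypotheses (d_gt0 : forall j, 0 < d j) (lam_gt0 : 0 < lam).

Lemma char_poly_Qmx_factor :
  exists2 p : {poly R[i]},
    char_poly (map_mx (real_complex R) (Qmx d lam)) = ('X - 1) * ('X - lam%:C%:P) ^+ 2 * p
    & forall z, root p z -> `|z| < lam%:C.
Proof.
pose f := real_complex R; pose T := map_mx f (trig_basis_mx R m).
have T_unit : T \in unitmx by rewrite map_unitmx trig_basis_mx_unit.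
have lsubmxT : lsubmx T = map_mx f (trig_mx R (3 + m)).
  by rewrite /T -map_lsubmx lsubmx_trig_basis_mx.
have QT : map_mx f (Qmx d lam) *m lsubmx T = lsubmx T *m map_mx f (Qtrig_mx d lam).
  by rewrite lsubmxT -!map_mxM Qmx_trig_mx.
exists (char_poly (drsubmx (invmx T *m map_mx f (Qmx d lam) *m T))).
  by rewrite (char_poly_stable T_unit QT) map_char_poly_Qtrig_mx.
move=> z; rewrite -eigenvalue_root_char => /(eigenvalue_stable_compl T_unit QT).
case=> x [x_neq0 xQ_z]; rewrite lsubmxT.
exact: Qmx_eigen_trig_orth.
Qed.

End CentralMatrixSpectrum.

Section SubdivisionMatrix.
Variables (R : realType) (n : nat) (d : 'I_n -> R) (lam : R).
Hypotheses (n_gt2 : (2 < n)%N) (d_gt0 : forall j, 0 < d j).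
Let n_gt0 : (0 < n)%N := ltnW (ltnW n_gt2).

Definition block_weight (b : nat) : R := if b == 3%N then 4 else 1.

Lemma Sentry_ge0 a j b l : (0 < a)%N -> 0 <= Sentry d lam a j b l.
Proof.
have dm_ge0 t := ltW (dm_gt0 n_gt2 d_gt0 t).
case: a => [//|[|[|[|//]]]] _; case: b => [|[|[|[|b]]]] //=;
  by do ! (apply: addr_ge0 || apply: mulr_ge0 || rewrite invr_ge0 || apply: ler0n
           || apply: dm_ge0).
Qed.

Lemma sum_eq_modn (t : nat) : \sum_(l < n) ((l : nat) == t %% n)%N%:R = 1 :> R.
Proof.
rewrite (bigD1 (Ordinal (ltn_pmod t n_gt0))) //= eqxx big1 ?addr0 // => l.
by rewrite -val_eqE /= => /negbTE ->.
Qed.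

Lemma Sentry_rowsum a j : (0 < a < 4)%N ->
  \sum_(b < 3) \sum_(l < n) Sentry d lam a j b.+1 l * block_weight b.+1 <= block_weight a / 4.
Proof.
have dm_pos := dm_gt0 n_gt2 d_gt0.
rewrite !big_ord_recl big_ord0 /= /block_weight /=.
case: a => [//|[|[|[|//]]]] _ /=; rewrite -!mulr_suml !sum_eq_modn ?big1 ?mul0r //; last lra.
all: rewrite [X in X <= _](_ : _ = 1 / 4) //; field.
all: by rewrite gt_eqF // addr_gt0.
Qed.

Lemma SmatC_ulsubmx :
  ulsubmx (SmatC d lam : 'M[R[i]]_(n + 3 * n)) = map_mx (real_complex R) (Qmx d lam).
Proof.
apply/matrixP => i j; rewrite !mxE /=.
by rewrite !(divn_small (ltn_ord _)) !(modn_small (ltn_ord _)).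
Qed.

Lemma SmatC_ursubmx : ursubmx (SmatC d lam : 'M[R[i]]_(n + 3 * n)) = 0.
Proof. by apply/matrixP => i j; rewrite !mxE /= (divn_small (ltn_ord i)) divnDl_self. Qed.

Lemma SmatC_drsubmxE (i k : 'I_(3 * n)) :
  drsubmx (SmatC d lam : 'M[R[i]]_(n + 3 * n)) i k =
  (Sentry d lam (i %/ n).+1 (i %% n) (k %/ n).+1 (k %% n))%:C.
Proof. by rewrite !mxE /= !divnDl_self // !modnDl. Qed.

Lemma eigenvalue_SmatC_drsubmx z :
  eigenvalue (drsubmx (SmatC d lam : 'M[R[i]]_(n + 3 * n))) z -> `|z| <= (1 / 4)%:C.
Proof.
apply: (eigenvalue_norm_le (w := fun k => (block_weight (k %/ n).+1)%:C)) => [k|i].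
  by rewrite ltcR /block_weight; case: ifP.
under eq_bigr do rewrite SmatC_drsubmxE normcR ger0_norm ?Sentry_ge0 // -rmorphM.
rewrite -rmorph_sum.
rewrite (@sum_ord_divmod _ 3 n
  (fun b l => Sentry d lam (i %/ n).+1 (i %% n) b.+1 l * block_weight b.+1)) //.
rewrite -rmorphM lecR mul1r mulrC Sentry_rowsum //=.
by rewrite ltnS ltn_divLR // mulnC.
Qed.

Lemma char_poly_SmatC :
  char_poly (SmatC d lam) = char_poly (map_mx (real_complex R) (Qmx d lam))
                            * char_poly (drsubmx (SmatC d lam : 'M[R[i]]_(n + 3 * n))).
Proof.
set S : 'M[R[i]]_(n + 3 * n) := SmatC d lam.
transitivity (char_poly S); first by [].
by rewrite -{1}[S]submxK SmatC_ulsubmx SmatC_ursubmx char_poly_lblock.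
Qed.

End SubdivisionMatrix.

Theorem lemma2 (R : realType) (n : nat) (d : 'I_n -> R) (lam : R)
  (hn : (3 <= n)%N) (hd : forall j, 0 < d j)
  (hlam1 : 1 / 4 < lam) (hlam2 : lam < 1) :
  exists q : {poly R[i]},
    char_poly (SmatC d lam) = ('X - 1) * ('X - lam%:C%:P) ^+ 2 * q /\
    forall z : R[i], root q z -> `|z| < lam%:C.
Proof.
(* [hlam2] only separates the eigenvalue 1 from lambda; the factorization does not use it. *)
move: (n - 3)%N (subnKC hn) d hd => m <- d hd.
have lam_gt0 : 0 < lam by apply: lt_trans hlam1; rewrite divr_gt0.
have [p charQ p_lt] := char_poly_Qmx_factor hd lam_gt0.
exists (p * char_poly (drsubmx (SmatC d lam : 'M[R[i]]_(3 + m + 3 * (3 + m))))); split.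
  by rewrite char_poly_SmatC // [RHS]mulrA -charQ.
move=> z; rewrite rootM => /orP [/p_lt //|].
rewrite -eigenvalue_root_char => /(@eigenvalue_SmatC_drsubmx R (3 + m) d lam isT hd) z_le.
by rewrite (le_lt_trans z_le) // ltcR.
Qed.
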